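(* Let $t\in[0,1]$. For each $n$ let $\boldsymbol{g}\in\mathbb{R}^n$ be a deterministic vector with $\|\boldsymbol{g}\|_2^2=O(n^{(1-t)/(1+t)})$, and let $b=b_n$ satisfy $b=\Omega(n^{-t/(1+t)})$. Let $\boldsymbol{w}=(w_1,\ldots,w_n)^\top$ have i.i.d. entries from $\mathbb{P}_w\in\mathcal{D}_1\cup\mathcal{D}_2$ (not depending on $n$). Then for any fixed $\delta>0$, $$\lim_{n\to\infty}\mathbb{P}\Bigl(\frac{|\boldsymbol{w}^\top\boldsymbol{g}|}{b\|\boldsymbol{w}\|_2^2}>\delta\Bigr)=0.$$
   Context: For $s>0$, $\mathcal{D}_s$ is the class of distributions of $\xi$ with $\mathbb{E}[\xi]=0$ and $1\le\mathbb{E}[|\xi|^s]\le2$. $a_n=O(c_n)$ means $|a_n|\le C|c_n|$ for a constant $C$; $b=\Omega(c_n)$ means $|c_n|\le C|b|$ for a constant $C>0$. Convention: $a/0=\infty$. *)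

From HB Require Import structures.
From mathcomp Require Import all_boot all_order all_algebra.
From mathcomp Require Import all_classical all_reals all_analysis.
Set Implicit Arguments. Unset Strict Implicit. Unset Printing Implicit Defensive.
Import Order.TTheory GRing.Theory Num.Theory.
Local Open Scope ring_scope.
Local Open Scope classical_set_scope.

(* Mutual independence of the finite family (X i)_{i<n} of real random
   variables: product rule for preimages of arbitrary Borel sets
   (taking B i = setT recovers every subfamily). *)
Definition mutually_independent (d : measure_display) (T : measurableType d)
  (R : realType) (P : probability T R) (n : nat) (X : 'I_n -> T -> R) : Prop :=
  forall B : 'I_n -> set R, (forall i, measurable (B i)) ->
    P (\bigcap_(i in [set: 'I_n]) (X i @^-1` B i)) =
    (\prod_(i < n) P (X i @^-1` B i))%E.

Definition in_D1 (R : realType) (mu : probability R R) : Prop :=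
  mu.-integrable setT (fun x : R => x%:E) /\
  (\int[mu]_x x%:E = 0)%E /\
  (1 <= \int[mu]_x (`|x|)%:E <= 2)%E.

Definition in_D2 (R : realType) (mu : probability R R) : Prop :=
  mu.-integrable setT (fun x : R => x%:E) /\
  (\int[mu]_x x%:E = 0)%E /\
  (1 <= \int[mu]_x (`|x| ^+ 2)%:E <= 2)%E.

(* The event { num / den > delta } with the convention a/0 = +oo. *)
Definition ratio_gt (R : realType) (delta num den : R) : bool :=
  if den == 0 then true else delta < num / den.

From HB Require Import structures.
From mathcomp Require Import all_boot all_order all_algebra.
From mathcomp Require Import all_classical all_reals all_analysis.
From mathcomp Require Import measurable_realfun lra ring.
Import Order.TTheory GRing.Theory Num.Theory.
Set Implicit Arguments. Unset Strict Implicit. Unset Printing Implicit Defensive.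
Local Open Scope ring_scope.
Local Open Scope classical_set_scope.

(* Let p := P(|w_1| >= 1/2), which is positive because E|w_1| >= 1 or
   E w_1^2 >= 1.  If ||w||^2 <= p n / 8, fewer than p n / 2 of the w_i satisfy
   |w_i| >= 1/2, a deviation of this binomial count from its mean p n which
   Chebyshev makes O(1/n)-unlikely.  Otherwise the event forces
   |w^T g| / b > delta p n / 8, while the growth assumptions give
   ||g||^2 / b^2 = O(n).  Approximate w_1 in L^1 by a finitely valued s(w_1)
   with mean m and split w_i = (s(w_i) - m) + (w_i - s(w_i) + m): the first
   parts are independent, centred and bounded, so their g-weighted sum has
   variance O(n) and Chebyshev gives O(1/n); the second parts are small in L^1,
   so Markov bounds their contribution by a multiple of the approximation
   error, which is arbitrary.  Finitely valued s make the variance computation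
   a finite sum over level sets and require no second moment of w_1. *)

Lemma measurable_preimage d (T : measurableType d) (R : realType)
  (f : T -> R) (B : set R) :
  measurable_fun setT f -> measurable B -> measurable (f @^-1` B).
Proof. by move=> mf mB; rewrite -[_ @^-1` _]setTI; exact: mf. Qed.

Lemma measurable_ler_set d (T : measurableType d) (R : realType) (f g : T -> R) :
  measurable_fun setT f -> measurable_fun setT g ->
  measurable [set x | f x <= g x].
Proof.
by move=> mf mg; rewrite -[X in measurable X]setTI; exact: measurable_fun_le.
Qed.

Lemma measurable_ltr_set d (T : measurableType d) (R : realType) (f g : T -> R) :
  measurable_fun setT f -> measurable_fun setT g ->
  measurable [set x | f x < g x].
Proof.
move=> mf mg; rewrite (_ : [set x | f x < g x] = ~` [set x | g x <= f x]).
  exact/measurableC/measurable_ler_set.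
by apply/seteqP; split => x /=; rewrite ltNge => /negP.
Qed.

Section real_expectation.
Context d (T : measurableType d) (R : realType) (P : probability T R).

(* [fine] sends an infinite integral to 0: only meaningful for integrable f. *)
Definition expectR (f : T -> R) : R := fine (\int[P]_x (f x)%:E).

Lemma integral_expectR (f : T -> R) : P.-integrable setT (EFin \o f) ->
  (\int[P]_x (f x)%:E = (expectR f)%:E)%E.
Proof. by move=> intf; rewrite fineK //; exact: integrable_fin_num. Qed.

Lemma integrableZl_EFin (c : R) (f : T -> R) : P.-integrable setT (EFin \o f) ->
  P.-integrable setT (EFin \o (fun x => c * f x)).
Proof.
move=> intf; have := integrableZl measurableT c intf.
by apply: eq_integrable => // x _ /=; rewrite EFinM.
Qed.

Lemma integrable_sum_EFin (I : Type) (s : seq I) (f : I -> T -> R) :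
  (forall k, P.-integrable setT (EFin \o f k)) ->
  P.-integrable setT (EFin \o (fun x => \sum_(k <- s) f k x)).
Proof.
move=> intf; have := @integrable_sum _ _ _ P setT measurableT I s xpredT
  (fun k x => (f k x)%:E) (fun k _ => intf k).
by apply: eq_integrable => // x _ /=; rewrite sumEFin.
Qed.

Lemma expectR_sum (I : Type) (s : seq I) (f : I -> T -> R) :
  (forall k, P.-integrable setT (EFin \o f k)) ->
  expectR (fun x => \sum_(k <- s) f k x) = \sum_(k <- s) expectR (f k).
Proof.
move=> intf; rewrite /expectR.
under eq_integral do rewrite -sumEFin.
rewrite (@integral_sum _ _ _ P setT measurableT I (fun k x => (f k x)%:E)) //.
by rewrite (eq_bigr (fun k => (expectR (f k))%:E)) ?sumEFin // => k _;
  rewrite integral_expectR.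
Qed.

Lemma expectRZl (c : R) (f : T -> R) : P.-integrable setT (EFin \o f) ->
  expectR (fun x => c * f x) = c * expectR f.
Proof.
move=> intf; rewrite /expectR.
under eq_integral do rewrite EFinM.
by rewrite (integralZl measurableT intf) integral_expectR.
Qed.

Lemma expectR_cst (c : R) : expectR (cst c) = c.
Proof.
rewrite /expectR (_ : \int[P]_x (cst c x)%:E = \int[P]_x (cst c%:E x))%E //.
by rewrite integral_cst //= probability_setT mule1.
Qed.

Lemma expectR_indic (A : set T) : measurable A -> expectR (\1_A) = fine (P A).
Proof. by move=> mA; rewrite /expectR integral_indic // setIT. Qed.

Lemma integrable_indic_comb (I : Type) (s : seq I) (c : I -> R) (A : I -> set T) :
  (forall k, measurable (A k)) ->
  P.-integrable setT (EFin \o (fun x => \sum_(k <- s) c k * \1_(A k) x)).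
Proof.
move=> mA; apply: integrable_sum_EFin => k; apply: integrableZl_EFin.
exact: integrable_indic.
Qed.

Lemma expectR_indic_comb (I : Type) (s : seq I) (c : I -> R) (A : I -> set T) :
  (forall k, measurable (A k)) ->
  expectR (fun x => \sum_(k <- s) c k * \1_(A k) x) =
  \sum_(k <- s) c k * fine (P (A k)).
Proof.
move=> mA; rewrite expectR_sum => [|k]; last first.
  by apply: integrableZl_EFin; exact: integrable_indic.
by apply: eq_bigr => k _; rewrite expectRZl ?expectR_indic //; exact: integrable_indic.
Qed.

Lemma markov_le (f : T -> R) (eps B : R) :
  measurable_fun setT f -> (forall x, 0 <= f x) -> 0 < eps ->
  (\int[P]_x (f x)%:E <= B%:E)%E ->
  (P [set x | (eps <= f x)%R] <= (B / eps)%:E)%E.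
Proof.
move=> mf f0 eps0 intB.
set A := [set x | (eps <= f x)%R].
have mA : measurable A by apply: measurable_ler_set.
have PA_fin : P A \is a fin_num by exact: fin_num_measure.
have epsPA : (eps%:E * P A = \int[P]_x (eps * \1_A x)%:E)%E.
  rewrite integral_expectR; last exact/integrableZl_EFin/integrable_indic.
  by rewrite expectRZl ?expectR_indic ?EFinM ?fineK //; exact: integrable_indic.
have : (eps%:E * P A <= B%:E)%E.
  rewrite epsPA; apply: le_trans intB; apply: ge0_le_integral => //.
  - by move=> x _; rewrite lee_fin; apply: mulr_ge0; [exact: ltW | rewrite indicE].
  - by apply/measurable_EFinP; apply: measurable_funM.
  - exact/measurable_EFinP.
  move=> x _; rewrite lee_fin indicE.
  by case: (boolP (x \in A)) => [/set_mem|_]; rewrite ?mulr1 ?mulr0.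
by rewrite -(fineK PA_fin) -EFinM !lee_fin ler_pdivlMr // mulrC.
Qed.

Lemma chebyshev_le (f : T -> R) (eps B : R) :
  measurable_fun setT f -> 0 < eps -> (\int[P]_x (f x ^+ 2)%:E <= B%:E)%E ->
  (P [set x | (eps <= `|f x|)%R] <= (B / eps ^+ 2)%:E)%E.
Proof.
move=> mf eps0 intB.
have -> : [set x | eps <= `|f x|] = [set x | eps ^+ 2 <= f x ^+ 2].
  apply: eq_set => x.
  by rewrite -[f x ^+ 2](real_normK (num_real (f x))) ler_sqr // nnegrE ltW.
by apply: markov_le => //; [exact: measurable_funX | move=> x; exact: sqr_ge0 |
  exact: exprn_gt0].
Qed.

End real_expectation.

Section finitely_valued.
Context d (T : measurableType d) (R : realType) (P : probability T R).
Context (mu : probability R R) (s : R -> R) (rs : seq R).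
Hypotheses (ms : measurable_fun setT s) (rs_uniq : uniq rs)
  (s_rs : forall y, s y \in rs).

Definition spmf (r : R) : R := fine (mu (s @^-1` [set r])).
Definition smean : R := \sum_(r <- rs) r * spmf r.
Definition svar : R := \sum_(r <- rs) (r - smean) ^+ 2 * spmf r.

Lemma svar_ge0 : 0 <= svar.
Proof.
by apply: sumr_ge0 => r _; rewrite mulr_ge0 ?sqr_ge0 // fine_ge0 // measure_ge0.
Qed.

Lemma measurable_level_set (r : R) : measurable (s @^-1` [set r]).
Proof. exact: measurable_preimage. Qed.

Lemma comp_indic_comb (phi : R -> R) (y : R) :
  phi (s y) = \sum_(r <- rs) phi r * \1_(s @^-1` [set r]) y.
Proof.
rewrite (bigD1_seq (s y)) //= indicE mem_set // mulr1.
rewrite big1 ?addr0 // => r /eqP rsy; rewrite indicE memNset ?mulr0 //.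
by move=> /= syr; apply: rsy.
Qed.

Section law.
Context (X Y : T -> R).
Hypotheses (mX : measurable_fun setT X) (mY : measurable_fun setT Y).
Hypothesis lawX : forall B, measurable B -> P (X @^-1` B) = mu B.

Let level_pair r r' := X @^-1` (s @^-1` [set r]) `&` Y @^-1` (s @^-1` [set r']).

Let measurable_level_pair r r' : measurable (level_pair r r').
Proof.
by apply: measurableI; apply: measurable_preimage => //; exact: measurable_level_set.
Qed.

Lemma comp_mul_indic_comb (phi psi : R -> R) (x : T) :
  phi (s (X x)) * psi (s (Y x)) =
  \sum_(r <- rs) \sum_(r' <- rs) (phi r * psi r') * \1_(level_pair r r') x.
Proof.
rewrite (comp_indic_comb phi) (comp_indic_comb psi) mulr_suml.
apply: eq_bigr => r _; rewrite mulr_sumr; apply: eq_bigr => r' _.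
by rewrite indicI mulrACA.
Qed.

Lemma integrable_comp_mul (phi psi : R -> R) :
  P.-integrable setT (EFin \o (fun x => phi (s (X x)) * psi (s (Y x)))).
Proof.
under eq_fun do rewrite comp_mul_indic_comb.
apply: integrable_sum_EFin => r; apply: integrable_indic_comb => r'.
exact: measurable_level_pair.
Qed.

Lemma expectR_comp (phi : R -> R) :
  expectR P (fun x => phi (s (X x))) = \sum_(r <- rs) phi r * spmf r.
Proof.
under eq_fun do rewrite comp_indic_comb.
rewrite expectR_indic_comb => [|r]; last first.
  by apply: measurable_preimage => //; exact: measurable_level_set.
by apply: eq_bigr => r _; rewrite lawX //; exact: measurable_level_set.
Qed.

Hypothesis lawY : forall B, measurable B -> P (Y @^-1` B) = mu B.
Hypothesis XY_indep : forall A B, measurable A -> measurable B ->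
  P (X @^-1` A `&` Y @^-1` B) = (P (X @^-1` A) * P (Y @^-1` B))%E.

Lemma expectR_comp_indep (phi psi : R -> R) :
  expectR P (fun x => phi (s (X x)) * psi (s (Y x))) =
  (\sum_(r <- rs) phi r * spmf r) * (\sum_(r <- rs) psi r * spmf r).
Proof.
under eq_fun do rewrite comp_mul_indic_comb.
rewrite expectR_sum => [|r]; last first.
  by apply: integrable_indic_comb => r'; exact: measurable_level_pair.
rewrite mulr_suml; apply: eq_bigr => r _.
rewrite expectR_indic_comb => [|r']; last exact: measurable_level_pair.
rewrite mulr_sumr; apply: eq_bigr => r' _.
have [mr mr'] := (measurable_level_set r, measurable_level_set r').
by rewrite /level_pair XY_indep // lawX // lawY // fineM ?fin_num_measure // mulrACA.
Qed.

End law.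

Lemma sum_spmf : \sum_(r <- rs) spmf r = 1.
Proof.
have -> : 1 = expectR mu (fun y => \sum_(r <- rs) 1 * \1_(s @^-1` [set r]) y).
  rewrite -[LHS](expectR_cst mu); congr expectR; apply/funext => y.
  by rewrite -(comp_indic_comb (fun=> 1)).
rewrite expectR_indic_comb; last exact: measurable_level_set.
by apply: eq_bigr => r _; rewrite mul1r.
Qed.

Lemma sum_centered_spmf : \sum_(r <- rs) (r - smean) * spmf r = 0.
Proof.
under eq_bigr do rewrite mulrBl.
by rewrite sumrB -mulr_sumr sum_spmf mulr1 subrr.
Qed.

Lemma smean_expectR : smean = expectR mu s.
Proof.
have -> : expectR mu s =
    expectR mu (fun y => \sum_(r <- rs) r * \1_(s @^-1` [set r]) y).
  by congr expectR; apply/funext => y; rewrite -(comp_indic_comb id).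
by rewrite expectR_indic_comb; last exact: measurable_level_set.
Qed.

End finitely_valued.

Lemma indic_mem01 (R : realType) (A : set R) (y : R) : \1_A y \in [:: 0; 1 : R].
Proof. by rewrite indicE !inE; case: (y \in A); rewrite ?eqxx ?orbT. Qed.

Lemma smean_indic (R : realType) (mu : probability R R) (A : set R) :
  smean mu (\1_A) [:: 0; 1] = fine (mu A).
Proof.
rewrite /smean /spmf !big_cons big_nil mul0r add0r addr0 mul1r.
congr (fine (mu _)); apply/seteqP; split => y /=; rewrite indicE.
  by case: (boolP (y \in A)) => [/set_mem //|_] /= /esym/eqP; rewrite oner_eq0.
by move=> yA; rewrite mem_set.
Qed.

Lemma integral_law d (T : measurableType d) (R : realType) (P : probability T R)
  (mu : probability R R) (X : T -> R) (h : R -> R) :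
  measurable_fun setT X -> (forall B, measurable B -> P (X @^-1` B) = mu B) ->
  measurable_fun setT h -> (forall y, 0 <= h y) ->
  (\int[P]_x (h (X x))%:E = \int[mu]_y (h y)%:E)%E.
Proof.
move=> mX lawX mh h0.
have := @ge0_integral_pushforward _ _ _ _ _ X mX P setT (EFin \o h)
  measurableT ((measurable_EFinP _ _).2 mh) (fun y _ => h0 y : (0 <= (h y)%:E)%E).
rewrite preimage_setT => <-.
by apply: eq_measure_integral => A mA _; exact: lawX.
Qed.

Lemma mutually_independent_pair d (T : measurableType d) (R : realType)
  (P : probability T R) n (X : 'I_n -> T -> R) :
  mutually_independent P X -> forall i j, i != j ->
  forall A B, measurable A -> measurable B ->
  P (X i @^-1` A `&` X j @^-1` B) = (P (X i @^-1` A) * P (X j @^-1` B))%E.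
Proof.
move=> X_indep i j ij A B mA mB.
pose C k := if k == i then A else if k == j then B else setT.
have mC k : measurable (C k) by rewrite /C; case: ifP => // _; case: ifP.
have := X_indep C mC.
have -> : \bigcap_(k in [set: 'I_n]) (X k @^-1` C k) = X i @^-1` A `&` X j @^-1` B.
  apply/seteqP; split => x.
    move=> Cx; split; first by have := Cx i I; rewrite /C eqxx.
    by have := Cx j I; rewrite /C eqxx eq_sym (negbTE ij).
  move=> [xA xB] k _; rewrite /C.
  by case: (eqVneq k i) => [->//|_]; case: (eqVneq k j) => [->//|_].
move=> ->; rewrite (bigD1 i) //= (bigD1 j) 1?eq_sym //= big1 ?mule1.
  by rewrite /C eqxx eq_sym (negbTE ij) eqxx.
move=> k /andP[ki kj]; rewrite /C (negbTE ki) (negbTE kj) preimage_setT.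
exact: probability_setT.
Qed.

Section iid_family.
Context d (T : measurableType d) (R : realType) (P : probability T R).
Context (mu : probability R R) (n : nat) (W : 'I_n -> T -> R).
Hypotheses (mW : forall i, measurable_fun setT (W i))
  (lawW : forall i B, measurable B -> P (W i @^-1` B) = mu B)
  (W_indep : mutually_independent P W).

Section simple_part.
Context (s : R -> R) (rs : seq R).
Hypotheses (ms : measurable_fun setT s) (rs_uniq : uniq rs)
  (s_rs : forall y, s y \in rs).
Let m := smean mu s rs.

Lemma expectR_centered_mul i j :
  expectR P (fun x => (s (W i x) - m) * (s (W j x) - m)) =
  if i == j then svar mu s rs else 0.
Proof.
case: eqVneq => [<-|ij].
  under eq_fun do rewrite -expr2.
  exact: (expectR_comp ms rs_uniq s_rs (mW i) (lawW i) (fun r => (r - m) ^+ 2)).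
rewrite (expectR_comp_indep ms rs_uniq s_rs (mW i) (mW j) (lawW i) (lawW j)
  (mutually_independent_pair W_indep ij) (fun r => r - m) (fun r => r - m)).
by rewrite /m sum_centered_spmf // mul0r.
Qed.

Lemma second_moment_centered (a : 'I_n -> R) :
  (\int[P]_x ((\sum_(i < n) a i * (s (W i x) - m)) ^+ 2)%:E =
   ((\sum_(i < n) a i ^+ 2) * svar mu s rs)%:E)%E.
Proof.
have int_UU i j : P.-integrable setT
    (EFin \o (fun x => (s (W i x) - m) * (s (W j x) - m))).
  exact: (integrable_comp_mul P ms rs_uniq s_rs (mW i) (mW j)
    (fun r => r - m) (fun r => r - m)).
have int_row i : P.-integrable setT (EFin \o (fun x =>
    \sum_(j < n) a i * a j * ((s (W i x) - m) * (s (W j x) - m)))).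
  by apply: integrable_sum_EFin => j; apply: integrableZl_EFin.
have sqr_expand x : (\sum_(i < n) a i * (s (W i x) - m)) ^+ 2 =
    \sum_(i < n) \sum_(j < n) a i * a j * ((s (W i x) - m) * (s (W j x) - m)).
  rewrite expr2 mulr_suml; apply: eq_bigr => i _; rewrite mulr_sumr.
  by apply: eq_bigr => j _; rewrite mulrACA.
under eq_integral do rewrite sqr_expand.
rewrite integral_expectR; last exact: integrable_sum_EFin.
rewrite expectR_sum //; congr EFin; rewrite mulr_suml; apply: eq_bigr => i _.
rewrite expectR_sum => [|j]; last exact: integrableZl_EFin.
rewrite (bigD1 i) //= big1 ?addr0 => [|j ji].
  by rewrite expectRZl // expectR_centered_mul eqxx expr2.
by rewrite expectRZl // expectR_centered_mul eq_sym (negbTE ji) mulr0.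
Qed.

Lemma prob_centered_sum_ge (a : 'I_n -> R) (t : R) : 0 < t ->
  (P [set x | (t <= `|\sum_(i < n) a i * (s (W i x) - m)|)%R] <=
   ((\sum_(i < n) a i ^+ 2) * svar mu s rs / t ^+ 2)%:E)%E.
Proof.
move=> t0; apply: chebyshev_le => //; last by rewrite second_moment_centered.
apply: measurable_sum => i; apply: measurable_funM => //.
by apply: measurable_funB => //; exact: measurableT_comp.
Qed.

End simple_part.

Lemma integral_abs_weighted_sum_le (h : R -> R) (a : 'I_n -> R) :
  measurable_fun setT h ->
  (\int[P]_x (`|\sum_(i < n) a i * h (W i x)|)%:E <=
   (\sum_(i < n) `|a i|)%:E * \int[mu]_y (`|h y|)%:E)%E.
Proof.
move=> mh.
have mhW i : measurable_fun setT (fun x => `|h (W i x)|).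
  by apply: measurableT_comp => //; exact: measurableT_comp.
apply: (@le_trans _ _ (\int[P]_x (\sum_(i < n) `|a i| * `|h (W i x)|)%:E)%E).
  apply: ge0_le_integral => //.
  - apply/measurable_EFinP; apply: measurableT_comp => //.
    apply: measurable_sum => i; apply: measurable_funM => //.
    exact: measurableT_comp.
  - by apply/measurable_EFinP; apply: measurable_sum => i; exact: measurable_funM.
  move=> x _; rewrite lee_fin; apply: (le_trans (ler_norm_sum _ _ _)).
  by apply: ler_sum => i _; rewrite normrM.
under eq_integral do rewrite -sumEFin.
rewrite ge0_integral_sum //; last first.
  by move=> i; apply/measurable_EFinP; exact: measurable_funM.
rewrite -sumEFin ge0_sume_distrl => [|i _]; last by [].
apply: lee_sum => i _.
under eq_integral do rewrite EFinM.
rewrite ge0_integralZl //; last exact/measurable_EFinP.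
by rewrite (integral_law (h := fun y => `|h y|) (mW i) (lawW i)) //;
  exact: measurableT_comp.
Qed.

Lemma prob_weighted_sum_ge (h : R -> R) (a : 'I_n -> R) (t B : R) :
  measurable_fun setT h -> 0 < t -> (\int[mu]_y (`|h y|)%:E <= B%:E)%E ->
  (P [set x | (t <= `|\sum_(i < n) a i * h (W i x)|)%R] <=
   ((\sum_(i < n) `|a i|) * B / t)%:E)%E.
Proof.
move=> mh t0 hB; apply: markov_le => //.
- apply: measurableT_comp => //; apply: measurable_sum => i.
  by apply: measurable_funM => //; exact: measurableT_comp.
apply: le_trans (integral_abs_weighted_sum_le a mh) _.
by rewrite EFinM lee_wpmul2l // lee_fin sumr_ge0.
Qed.

End iid_family.

Section centred_law.
Import HBSimple.
Context (R : realType) (mu : probability R R).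
Hypotheses (mu_int : mu.-integrable setT (fun y => y%:E))
  (mu_mean0 : (\int[mu]_y y%:E = 0)%E).

Lemma simple_L1_approximation (e : R) : 0 < e ->
  exists s : R -> R, exists rs : seq R,
    [/\ measurable_fun setT s, uniq rs, (forall y, s y \in rs) &
        (\int[mu]_y (`|y - s y|)%:E <= e%:E)%E].
Proof.
move=> e0.
have [g_ [_ _ /fine_cvgP[[N1 _ fin_g] g_cvg]]] :=
  approximation_sfun_integrable measurableT mu_int.
have [N2 _ small_g] := cvgr_lt _ g_cvg e e0.
pose N := maxn N1 N2.
have [rs0 range_g] := (finite_seqP _).1 (fimfunP (g_ N)).
exists (g_ N), (undup rs0); split.
- exact: measurable_funP.
- exact: undup_uniq.
- move=> y; rewrite mem_undup.
  have : range (g_ N) (g_ N y) by exists y.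
  by rewrite range_g.
have /= fin := fin_g N (leq_maxl N1 N2).
have /= lt_e := small_g N (leq_maxr N1 N2).
under eq_integral => y _ do rewrite (_ : `|y - g_ N y|%:E = `|y%:E - (g_ N y)%:E|%E) //.
by rewrite -(fineK fin) lee_fin ltW.
Qed.

Context (s : R -> R) (rs : seq R).
Hypotheses (ms : measurable_fun setT s) (rs_uniq : uniq rs)
  (s_rs : forall y, s y \in rs).

Lemma abs_smean_le :
  ((`|smean mu s rs|)%:E <= \int[mu]_y (`|y - s y|)%:E)%E.
Proof.
have int_s : mu.-integrable setT (EFin \o s).
  apply: (eq_integrable _
    (EFin \o fun y => \sum_(r <- rs) r * \1_(s @^-1` [set r]) y)) => //.
    by move=> y _ /=; rewrite -(comp_indic_comb rs_uniq s_rs id).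
  by apply: integrable_indic_comb => r; exact: measurable_level_set.
have smean_int : ((smean mu s rs)%:E = \int[mu]_y ((s y)%:E - y%:E))%E.
  rewrite integralB_EFin // (_ : \int[mu]_x x%:E = 0)%E; last exact: mu_mean0.
  by rewrite sube0 integral_expectR // smean_expectR.
rewrite -abse_EFin smean_int; apply: le_trans (le_abse_integral _ _ _) _ => //.
  by apply/measurable_EFinP; exact: measurable_funB.
by under eq_integral => y _ do rewrite -EFinB abse_EFin distrC.
Qed.

Lemma integral_residual_le (e : R) : (\int[mu]_y (`|y - s y|)%:E <= e%:E)%E ->
  (\int[mu]_y (`|y - s y + smean mu s rs|)%:E <= (2 * e)%:E)%E.
Proof.
move=> dist_e; set m := smean mu s rs.
have mdist : measurable_fun setT (fun y : R => `|y - s y|).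
  by apply: measurableT_comp => //; exact: measurable_funB.
apply: (@le_trans _ _ (\int[mu]_y (`|y - s y| + `|m|)%:E)%E).
  apply: ge0_le_integral => //.
  - apply/measurable_EFinP; apply: measurableT_comp => //.
    by apply: measurable_funD => //; exact: measurable_funB.
  - by apply/measurable_EFinP; exact: measurable_funD.
  by move=> y _; rewrite lee_fin ler_normD.
under eq_integral do rewrite EFinD.
rewrite ge0_integralD //; last exact/measurable_EFinP.
rewrite integral_cst //= probability_setT mule1 (_ : 2 * e = e + e); last by ring.
by rewrite EFinD leeD //; exact: le_trans abs_smean_le dist_e.
Qed.

End centred_law.

Definition away_from0 {R : realType} : set R := [set y | 2^-1 <= `|y|].

Lemma measurable_away_from0 (R : realType) : measurable (@away_from0 R).
Proof. by apply: measurable_ler_set => //; exact: normr_measurable. Qed.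

Lemma in_D_mass_away_from0 (R : realType) (mu : probability R R) :
  in_D1 mu \/ in_D2 mu -> 0 < fine (mu away_from0).
Proof.
move=> mu_D; set A := @away_from0 R; have mA : measurable A := @measurable_away_from0 R.
rewrite lt_neqAle fine_ge0 ?measure_ge0 // andbT; apply/negP => /eqP muA0.
have small_ae : {ae mu, forall y : R, setT y -> `|y| <= 2^-1}.
  exists A; split => //; first by rewrite -(fineK (fin_num_measure _ _ mA)) -muA0.
  move=> y /= y_big; rewrite /A /away_from0 /= ltW // ltNge.
  by apply/negP => ?; apply: y_big.
have integral_le (f : R -> R) (c : R) : measurable_fun setT f ->
    (forall y, 0 <= f y) -> (forall y, `|y| <= 2^-1 -> f y <= c) ->
    (\int[mu]_y (f y)%:E <= c%:E)%E.
  move=> mf f0 fc; rewrite -[c%:E]mule1 -(probability_setT mu) -integral_cst //.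
  apply: ae_ge0_le_integral => //.
  - by move=> y _; rewrite lee_fin.
  - exact/measurable_EFinP.
  - by move=> y _; rewrite lee_fin (le_trans (f0 0)) // fc ?normr0.
  by apply: filterS small_ae => y yc _; rewrite lee_fin fc //; exact: yc.
case: mu_D => [[_ [_ /andP[E1 _]]] | [_ [_ /andP[E1 _]]]].
- have := le_trans E1 (integral_le _ 2^-1 (@normr_measurable R setT)
    (@normr_ge0 _ _) (fun _ h => h)).
  by rewrite lee_fin; lra.
- have : (\int[mu]_y (`|y| ^+ 2)%:E <= (2^-1 ^+ 2)%:E)%E.
    apply: integral_le => [|y|y y_small]; last by have := normr_ge0 y; nra.
    by apply: measurable_funX; exact: normr_measurable.
    exact: sqr_ge0.
  by move/(le_trans E1); rewrite lee_fin expr2; lra.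
Qed.

Lemma ratio_gtE (R : realType) (delta a c : R) :
  ratio_gt delta a c = (c == 0) || (delta * c ^+ 2 < a * c).
Proof.
rewrite /ratio_gt; case: eqP => //= /eqP c0.
have c2 : 0 < c ^+ 2 by rewrite -real_normK ?num_real // exprn_gt0 // normr_gt0.
by rewrite -(ltr_pM2r c2); congr (_ < _); field.
Qed.

Lemma measurable_ratio_gt d (T : measurableType d) (R : realType) (delta : R)
  (num den : T -> R) : measurable_fun setT num -> measurable_fun setT den ->
  measurable [set x | ratio_gt delta (num x) (den x)].
Proof.
move=> mnum mden.
have -> : [set x | ratio_gt delta (num x) (den x)] =
    den @^-1` [set 0] `|` [set x | delta * den x ^+ 2 < num x * den x].
  apply/seteqP; split => x; rewrite /= ratio_gtE.
    by case/orP => [/eqP|]; [left | right].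
  by case=> [->|->]; rewrite ?eqxx ?orbT.
apply: measurableU; first exact: measurable_preimage (measurable_set1 _).
apply: measurable_ltr_set; last exact: measurable_funM.
by apply: measurable_funM => //; exact: measurable_funX.
Qed.

Section deterministic_split.
Context (R : realType) (n : nat).
Implicit Types (v y z a : 'I_n -> R).

Lemma indic_away_from0_le (y : R) : \1_away_from0 y <= 4 * y ^+ 2.
Proof.
rewrite indicE; case: (boolP (y \in away_from0)) => [/set_mem /= y_big|_].
  have : 1 <= 2 * `|y| by move: y_big; rewrite /away_from0 /=; lra.
  by rewrite -real_normK ?num_real //; have := normr_ge0 y; nra.
by rewrite mulr_ge0 ?sqr_ge0.
Qed.

Lemma few_away_from0 v (p : R) :
  \sum_(i < n) v i ^+ 2 <= p * n%:R / 8 ->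
  p * n%:R / 2 <= `|\sum_(i < n) (\1_away_from0 (v i) - p)|.
Proof.
move=> small_energy.
have count_le : \sum_(i < n) \1_away_from0 (v i) <= 4 * \sum_(i < n) v i ^+ 2.
  by rewrite mulr_sumr; apply: ler_sum => i _; exact: indic_away_from0_le.
rewrite sumrB sumr_const card_ord -mulr_natl -normrN.
by apply: le_trans (ler_norm _); lra.
Qed.

Lemma large_energy_split v y z (gv : 'I_n -> R) (bb delta c : R) :
  (forall i, v i = y i + z i) -> 0 < delta -> 0 < c -> bb != 0 ->
  c * n%:R < \sum_(i < n) v i ^+ 2 ->
  ratio_gt delta `|\sum_(i < n) v i * gv i| (bb * \sum_(i < n) v i ^+ 2) ->
  delta * c * n%:R / 2 <= `|\sum_(i < n) gv i / `|bb| * y i| \/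
  delta * c * n%:R / 2 <= `|\sum_(i < n) gv i / `|bb| * z i|.
Proof.
move=> vyz delta0 c0 bb0 large.
set S := \sum_(i < n) v i ^+ 2 in large *; set N := `|\sum_(i < n) v i * gv i|.
have S0 : 0 < S by apply: le_lt_trans large; rewrite mulr_ge0 ?ler0n ?ltW.
rewrite ratio_gtE mulf_eq0 (negbTE bb0) (gt_eqF S0) /= => ratio.
have bbS0 : 0 < bb * S.
  have : 0 < (bb * S) ^+ 2.
    by rewrite -real_normK ?num_real // exprn_gt0 // normr_gt0 mulf_neq0 // gt_eqF.
  move/(mulr_gt0 delta0)/lt_trans/(_ ratio); rewrite !ltNge => /negP NbbS_gt0.
  apply/negP => bbS_le0; apply: NbbS_gt0.
  exact: mulr_ge0_le0 (normr_ge0 _) bbS_le0.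
have bb_pos : 0 < bb by rewrite -(pmulr_lgt0 _ S0).
have N_large : delta * c * n%:R * bb < N.
  have : delta * (bb * S) < N by rewrite -(ltr_pM2r bbS0) -mulrA -expr2.
  have : delta * bb * (c * n%:R) < delta * bb * S by rewrite ltr_pM2l ?mulr_gt0.
  lra.
have split_sum : \sum_(i < n) gv i / `|bb| * y i + \sum_(i < n) gv i / `|bb| * z i =
    (\sum_(i < n) v i * gv i) / bb.
  rewrite -big_split mulr_suml (gtr0_norm bb_pos) /=.
  by apply: eq_bigr => i _; rewrite vyz; ring.
have : delta * c * n%:R < `|\sum_(i < n) gv i / `|bb| * y i| +
                          `|\sum_(i < n) gv i / `|bb| * z i|.
  apply: lt_le_trans (ler_normD _ _).
  by rewrite split_sum normrM normfV (gtr0_norm bb_pos) ltr_pdivlMr.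
case: (lerP (delta * c * n%:R / 2) `|\sum_(i < n) gv i / `|bb| * y i|); first by left.
by right; lra.
Qed.

Lemma ratio_gt_cases v (gv : 'I_n -> R) (s : R -> R) (m p bb delta : R) :
  0 < p -> 0 < delta -> bb != 0 ->
  ratio_gt delta `|\sum_(i < n) v i * gv i| (bb * \sum_(i < n) v i ^+ 2) ->
  [\/ p * n%:R / 2 <= `|\sum_(i < n) (\1_away_from0 (v i) - p)|,
      delta * p * n%:R / 16 <= `|\sum_(i < n) gv i / `|bb| * (s (v i) - m)| |
      delta * p * n%:R / 16 <= `|\sum_(i < n) gv i / `|bb| * (v i - s (v i) + m)|].
Proof.
move=> p_gt0 delta_gt0 bb_neq0 ratio.
have [small|large] := lerP (\sum_(i < n) v i ^+ 2) (p / 8 * n%:R).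
  by apply: Or31; apply: few_away_from0; rewrite mulrAC.
have vyz i : v i = (s (v i) - m) + (v i - s (v i) + m) by ring.
have p8 : 0 < p / 8 by rewrite divr_gt0.
have := large_energy_split vyz delta_gt0 p8 bb_neq0 large ratio.
rewrite (_ : delta * (p / 8) * n%:R / 2 = delta * p * n%:R / 16); last by field.
by case=> ?; [apply: Or32 | apply: Or33].
Qed.

Lemma sum_abs_le_sum_sqr a :
  \sum_(i < n) `|a i| <= (n%:R + \sum_(i < n) a i ^+ 2) / 2.
Proof.
have : \sum_(i < n) `|a i| * 2 <= \sum_(i < n) (1 + a i ^+ 2).
  apply: ler_sum => i _; have := sqr_ge0 (`|a i| - 1).
  by rewrite -[a i ^+ 2]real_normK ?num_real //; nra.
by rewrite big_split sumr_const card_ord -mulr_suml /=; lra.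
Qed.

End deterministic_split.

Lemma energy_le_sqr (R : realType) (t C1 C2 bb G : R) (n : nat) :
  0 <= t -> (0 < n)%N -> G <= C1 * n%:R `^ ((1 - t) / (1 + t)) -> 0 < C2 ->
  n%:R `^ (- t / (1 + t)) <= C2 * `|bb| ->
  bb != 0 /\ G <= `|C1| * C2 ^+ 2 * n%:R * bb ^+ 2.
Proof.
move=> t0 n0 G_le C2_gt0 bb_ge.
have x0 : 0 < n%:R :> R by rewrite ltr0n.
set x := n%:R in x0 G_le bb_ge *.
set u := x `^ ((1 - t) / (1 + t)) in G_le.
pose v := x `^ (t / (1 + t)).
have u0 : 0 <= u by exact: powR_ge0.
have v0 : 0 < v by exact: powR_gt0.
have t1 : 1 + t != 0 by rewrite gt_eqF // ltr_pwDl.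
have uvv : u * v * v = x.
  rewrite /u /v -!powRD; try by apply/implyP => _; rewrite gt_eqF.
  by rewrite (_ : _ + _ + _ = 1) ?powRr1 ?ltW //; field.
rewrite mulNr powRN -/v in bb_ge.
have one_le : 1 <= C2 * `|bb| * v by rewrite -(ler_pM2r v0) mulVf ?gt_eqF // in bb_ge.
have bb0 : bb != 0 by apply: contraTneq one_le => ->; rewrite normr0 mulr0 mul0r; lra.
split => //.
have : 1 <= C2 ^+ 2 * bb ^+ 2 * v ^+ 2.
  by rewrite -(real_normK (num_real bb)) -!exprMn; exact: exprn_ege1.
have : G <= `|C1| * u.
  by apply: le_trans G_le _; rewrite ler_wpM2r // real_ler_norm // num_real.
rewrite -uvv; have : 0 <= `|C1| * u by rewrite mulr_ge0.
nra.
Qed.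

Lemma chebyshev_terms_le (R : realType) (n : nat) (p delta K e VA Vs A2 A1 : R) :
  (0 < n)%N -> 0 < p -> 0 < delta -> 0 <= VA -> 0 <= Vs -> 0 <= e ->
  A2 <= K * n%:R -> A1 <= (1 + K) * n%:R / 2 ->
  n%:R * VA / (p * n%:R / 2) ^+ 2 + A2 * Vs / (delta * p * n%:R / 16) ^+ 2 +
    A1 * (2 * e) / (delta * p * n%:R / 16) <=
  (4 * VA / p ^+ 2 + 256 * K * Vs / (delta * p) ^+ 2) / n%:R +
    16 * (1 + K) * e / (delta * p).
Proof.
move=> n_gt0 p_gt0 delta_gt0 VA0 Vs0 e0 A2_le A1_le.
have n_pos : 0 < n%:R :> R by rewrite ltr0n.
set t := delta * p * n%:R / 16.
have t_pos : 0 < t by rewrite /t !divr_gt0 ?mulr_gt0.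
have [p0 n0 d0] : [/\ p != 0, n%:R != 0 :> R & delta != 0].
  by split; apply: lt0r_neq0.
have -> : n%:R * VA / (p * n%:R / 2) ^+ 2 = 4 * VA / p ^+ 2 / n%:R.
  by field; rewrite n0 p0.
have term2 : A2 * Vs / t ^+ 2 <= 256 * K * Vs / (delta * p) ^+ 2 / n%:R.
  apply: le_trans (_ : K * n%:R * Vs / t ^+ 2 <= _).
    by rewrite ler_wpM2r ?invr_ge0 ?sqr_ge0 // ler_wpM2r.
  by rewrite le_eqVlt; apply/orP; left; apply/eqP; rewrite /t; field; rewrite n0 p0 d0.
have term3 : A1 * (2 * e) / t <= 16 * (1 + K) * e / (delta * p).
  apply: le_trans (_ : (1 + K) * n%:R / 2 * (2 * e) / t <= _).
    apply: ler_wpM2r; first by rewrite invr_ge0 ltW.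
    by apply: ler_wpM2r; rewrite ?mulr_ge0.
  by rewrite le_eqVlt; apply/orP; left; apply/eqP; rewrite /t; field; rewrite n0 p0 d0.
by rewrite mulrDl; lra.
Qed.

Section ratio_event.
Context d (T : measurableType d) (R : realType) (P : probability T R).
Context (mu : probability R R) (n : nat) (W : 'I_n -> T -> R).
Hypotheses (mW : forall i, measurable_fun setT (W i))
  (lawW : forall i B, measurable B -> P (W i @^-1` B) = mu B)
  (W_indep : mutually_independent P W)
  (mu_int : mu.-integrable setT (fun y => y%:E))
  (mu_mean0 : (\int[mu]_y y%:E = 0)%E).
Context (s : R -> R) (rs : seq R) (e : R).
Hypotheses (ms : measurable_fun setT s) (rs_uniq : uniq rs)
  (s_rs : forall y, s y \in rs)
  (s_close : (\int[mu]_y (`|y - s y|)%:E <= e%:E)%E).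
Hypothesis n_gt0 : (0 < n)%N.
Let p := fine (mu away_from0).
Hypothesis p_gt0 : 0 < p.

Let measurable_abs_ge (f : T -> R) (t : R) : measurable_fun setT f ->
  measurable [set x | t <= `|f x|].
Proof. by move=> mf; apply: measurable_ler_set => //; exact: measurableT_comp. Qed.

Lemma prob_count_away_from0_dev :
  (P [set x | (p * n%:R / 2 <= `|\sum_(i < n) (\1_away_from0 (W i x) - p)|)%R] <=
   (n%:R * svar mu \1_away_from0 [:: 0; 1] / (p * n%:R / 2) ^+ 2)%:E)%E.
Proof.
have m1A := @measurable_indic _ _ R setT _ (@measurable_away_from0 R).
have u01 : uniq [:: 0; 1 : R] by rewrite /= inE eq_sym oner_eq0.
have -> : [set x | (p * n%:R / 2 <= `|\sum_(i < n) (\1_away_from0 (W i x) - p)|)%R] =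
    [set x | (p * n%:R / 2 <= `|\sum_(i < n)
      1 * (\1_away_from0 (W i x) - smean mu \1_away_from0 [:: 0; 1])|)%R].
  by apply: eq_set => x; rewrite smean_indic; under [in RHS]eq_bigr do rewrite mul1r.
apply: le_trans (prob_centered_sum_ge mW lawW W_indep m1A u01
  (@indic_mem01 R away_from0) (fun=> 1) _) _.
  by rewrite divr_gt0 ?mulr_gt0 ?ltr0n.
by under eq_bigr do rewrite expr1n; rewrite sumr_const card_ord.
Qed.

Lemma prob_ratio_gt_le (gv : 'I_n -> R) (bb delta K : R) :
  0 < delta -> bb != 0 -> \sum_(i < n) gv i ^+ 2 <= K * n%:R * bb ^+ 2 ->
  (P [set x | (ratio_gt delta `|\sum_(i < n) W i x * gv i|
                (bb * \sum_(i < n) W i x ^+ 2))%R] <=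
   ((4 * svar mu \1_away_from0 [:: 0; 1] / p ^+ 2 +
     256 * K * svar mu s rs / (delta * p) ^+ 2) / n%:R +
    16 * (1 + K) * e / (delta * p))%:E)%E.
Proof.
move=> delta_gt0 bb_neq0 energy.
have mWs i : measurable_fun setT (fun x => s (W i x)) := measurableT_comp ms (mW i).
set m := smean mu s rs; pose a i := gv i / `|bb|; set t := delta * p * n%:R / 16.
have t_pos : 0 < t by rewrite /t !divr_gt0 ?mulr_gt0 ?ltr0n.
set E := [set x | ratio_gt _ _ _].
pose F1 := [set x | (p * n%:R / 2 <= `|\sum_(i < n) (\1_away_from0 (W i x) - p)|)%R].
pose F2 := [set x | (t <= `|\sum_(i < n) a i * (s (W i x) - m)|)%R].
pose F3 := [set x | (t <= `|\sum_(i < n) a i * (W i x - s (W i x) + m)|)%R].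
have mE : measurable E.
  apply: measurable_ratio_gt.
    apply: measurableT_comp => //; apply: measurable_sum => i.
    exact: measurable_funM.
  apply: measurable_funM => //; apply: measurable_sum => i.
  exact: measurable_funX.
have mF1 : measurable F1.
  have m1A := @measurable_indic _ _ R setT _ (@measurable_away_from0 R).
  apply: measurable_abs_ge; apply: measurable_sum => i.
  by apply: measurable_funB => //; exact: measurableT_comp.
have mF2 : measurable F2.
  apply: measurable_abs_ge; apply: measurable_sum => i.
  by apply: measurable_funM => //; exact: measurable_funB.
have mF3 : measurable F3.
  apply: measurable_abs_ge; apply: measurable_sum => i; apply: measurable_funM => //.
  by apply: measurable_funD => //; exact: measurable_funB.
have PE : (P E <= P F1 + P F2 + P F3)%E.
  have E_sub : E `<=` F1 `|` F2 `|` F3.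
    by move=> x /(ratio_gt_cases s m p_gt0 delta_gt0 bb_neq0) [?|?|?];
      [left; left | left; right | right].
  apply: le_trans (le_measure P (mem_set mE) _ E_sub) _.
    by rewrite inE; apply: measurableU => //; exact: measurableU.
  apply: le_trans (measureU2 P (measurableU _ _ mF1 mF2) mF3) _.
  by rewrite leeD2r // measureU2.
have F1_le := prob_count_away_from0_dev.
have F2_le : (P F2 <= ((\sum_(i < n) a i ^+ 2) * svar mu s rs / t ^+ 2)%:E)%E.
  exact: prob_centered_sum_ge.
have F3_le : (P F3 <= ((\sum_(i < n) `|a i|) * (2 * e) / t)%:E)%E.
  apply: (prob_weighted_sum_ge mW lawW (h := fun y => y - s y + m)) => //.
    by apply: measurable_funD => //; exact: measurable_funB.
  exact: integral_residual_le.
have sum_a2 : \sum_(i < n) a i ^+ 2 <= K * n%:R.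
  have bb2 : 0 < bb ^+ 2 by rewrite -real_normK ?num_real // exprn_gt0 ?normr_gt0.
  under eq_bigr do rewrite expr_div_n real_normK ?num_real //.
  by rewrite -mulr_suml ler_pdivrMr.
apply: (le_trans PE); apply: le_trans (leeD (leeD F1_le F2_le) F3_le) _.
rewrite -!EFinD lee_fin; apply: chebyshev_terms_le => //; try exact: svar_ge0.
- by rewrite -lee_fin (le_trans _ s_close) // integral_ge0.
- by apply: le_trans (sum_abs_le_sum_sqr a) _; lra.
Qed.
End ratio_event.

Lemma cvge0_nonneg (R : realType) (u : nat -> \bar R) :
  (forall n, 0 <= u n)%E ->
  (forall tau : R, 0 < tau -> exists N, forall n, (N <= n)%N -> (u n <= tau%:E)%E) ->
  u @ \oo --> 0%E.
Proof.
move=> u_ge0 u_small.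
have u_fin n (c : R) : (u n <= c%:E)%E -> u n \is a fin_num.
  by move=> un_le; rewrite ge0_fin_numE // (le_lt_trans un_le) ?ltry.
apply/fine_cvgP; split.
  by have [N uN] := u_small 1 ltr01; exists N => // n /uN /u_fin.
apply/cvgrPdist_le => tau tau_gt0; have [N uN] := u_small tau tau_gt0.
exists N => // n /= /uN un_le.
by rewrite sub0r normrN ger0_norm ?fine_ge0 // -lee_fin fineK // (u_fin _ _ un_le).
Qed.

Unset Implicit Arguments.

Theorem lemmaA4 (R : realType) (d : measure_display) (T : measurableType d)
  (P : probability T R) (t : R) (g : nat -> nat -> R) (b : nat -> R)
  (mu : probability R R) (w : nat -> nat -> T -> R) (delta : R) :
  0 <= t <= 1 ->
  (exists C : R, forall n : nat, (0 < n)%N ->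
      \sum_(i < n) g n i ^+ 2 <= C * (n%:R `^ ((1 - t) / (1 + t)))) ->
  (exists C : R, 0 < C /\ forall n : nat, (0 < n)%N ->
      n%:R `^ (- t / (1 + t)) <= C * `|b n|) ->
  (in_D1 mu \/ in_D2 mu) ->
  (forall n i, (i < n)%N -> measurable_fun setT (w n i)) ->
  (forall n i, (i < n)%N -> forall B : set R, measurable B ->
      P (w n i @^-1` B) = mu B) ->
  (forall n, mutually_independent P (fun i : 'I_n => w n i)) ->
  0 < delta ->
  (fun n : nat => P [set x | ratio_gt delta
       `|\sum_(i < n) w n i x * g n i|
       (b n * \sum_(i < n) w n i x ^+ 2)]) @ \oo --> 0%E.
Proof.
move=> /andP[t_ge0 _] [C1 g_energy] [C2 [C2_gt0 b_large]] mu_D mw law indep delta_gt0.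
have p_gt0 := in_D_mass_away_from0 mu_D; set p := fine _ in p_gt0.
have [mu_int mu_mean0] : mu.-integrable setT (fun y => y%:E) /\ (\int[mu]_y y%:E = 0)%E.
  by case: mu_D => -[? []].
set K := `|C1| * C2 ^+ 2.
have K1_gt0 : 0 < 1 + K by rewrite ltr_pwDl // mulr_ge0 ?sqr_ge0.
apply: cvge0_nonneg => [n|tau tau_gt0]; first exact: measure_ge0.
pose e := tau * delta * p / (32 * (1 + K)).
have e_gt0 : 0 < e by rewrite !divr_gt0 ?mulr_gt0.
have [s [rs [ms rs_uniq s_rs s_close]]] := simple_L1_approximation mu_int e_gt0.
set C0 := 4 * svar mu \1_away_from0 [:: 0; 1] / p ^+ 2 +
  256 * K * svar mu s rs / (delta * p) ^+ 2.
exists (Num.trunc (2 * C0 / tau)).+1 => n n_large.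
have n_gt0 : (0 < n)%N by apply: leq_trans n_large.
have [b_neq0 energy] :=
  energy_le_sqr t_ge0 n_gt0 (g_energy n n_gt0) C2_gt0 (b_large n n_gt0).
apply: le_trans (prob_ratio_gt_le (fun i => mw n i (ltn_ord i))
  (fun i => law n i (ltn_ord i)) (indep n) mu_int mu_mean0 ms rs_uniq s_rs
  s_close n_gt0 p_gt0 delta_gt0 b_neq0 energy) _.
rewrite -/p -/K -/C0 lee_fin.
have [p0 d0 K0] : [/\ p != 0, delta != 0 & 1 + K != 0] by split; apply: lt0r_neq0.
have -> : 16 * (1 + K) * e / (delta * p) = tau / 2.
  by rewrite /e; field; rewrite p0 d0 K0.
suff : C0 / n%:R <= tau / 2 by lra.
have : 2 * C0 / tau < n%:R by apply: lt_le_trans (truncnS_gt _) _; rewrite ler_nat.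
by rewrite ltr_pdivrMr // ler_pdivrMr ?ltr0n //; lra.
Qed.
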